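(* Let $G$ be a graph with $L(G)=2l(G)$. Then there do not exist two distinct vertices $u,v$ of degree one in $G$ that are adjacent to the same vertex $w$.
   Context: Graphs are finite, undirected, without loops or multiple edges. $\nu(G)$ denotes the maximum size of a matching of $G$; a matching is maximum if it has $\nu(G)$ edges. For $F\subseteq E(G)$, $G\setminus F$ is the graph with vertex set $V(G)$ and edge set $E(G)\setminus F$. Define $L(G)=\max\{\nu(G\setminus F): F \text{ a maximum matching of } G\}$ and $l(G)=\min\{\nu(G\setminus F): F \text{ a maximum matching of } G\}$. *)

(* Simple graphs: symmetric irreflexive relation on a finType. *)
From mathcomp Require Import all_boot.
Set Implicit Arguments. Unset Strict Implicit. Unset Printing Implicit Defensive.

Section Matchings.
Variable T : finType.

Definition edges (e : rel T) : {set {set T}} :=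
  [set [set x; y] | x in T, y in T & e x y].

Definition is_matching (F M : {set {set T}}) : bool :=
  (M \subset F) &&
  [forall f1 in M, forall f2 in M, (f1 != f2) ==> [disjoint f1 & f2]].

Definition nu (F : {set {set T}}) : nat :=
  \max_(M : {set {set T}} | is_matching F M) #|M|.

Definition is_max_matching (F M : {set {set T}}) : bool :=
  is_matching F M && (#|M| == nu F).

Definition Lg (e : rel T) : nat :=
  \max_(M : {set {set T}} | is_max_matching (edges e) M) nu (edges e :\: M).

(* l(G) = min { nu(G \ F) : F maximum matching of G }.  The neutral element
   nu(G) is harmless: a maximum matching always exists and nu(G \ F) <= nu(G). *)
Definition lg (e : rel T) : nat :=
  \big[minn/nu (edges e)]_(M : {set {set T}} | is_max_matching (edges e) M)
     nu (edges e :\: M).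

Definition degree (e : rel T) (x : T) : nat := #|[set y | e x y]|.

End Matchings.

From mathcomp Require Import all_boot zify.

Set Implicit Arguments. Unset Strict Implicit. Unset Printing Implicit Defensive.

(* Suppose it does, and fix a maximum matching F with nu(G \ F) = l(G).
   Since F is maximum, it covers w by an edge f0 (otherwise a pendant edge at
   w could be added), and since uw and vw share w, one of them, say pw, is
   not in F.  Now let F' be any maximum matching and M a matching of G \ F'.
   Split M into M :&: F, which lies in F :\: F', and M :\: F, a matching of
   G \ F.  As |F| = |F'|, |F :\: F'| = |F' :\: F| <= nu(G \ F), hence
   |M| <= 2 nu(G \ F).  The pendant edge pw makes this strict: depending on
   where f0 goes, either F' :\: F or M :\: F leaves w uncovered and can be
   augmented by pw, or M :&: F misses f0.  So nu(G \ F') < 2 l(G) for every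
   maximum matching F', i.e. L(G) < 2 l(G). *)

Section Matchings.
Variable T : finType.
Implicit Types (B F M N : {set {set T}}) (f : {set T}).

Lemma leq_nu B N : is_matching B N -> #|N| <= nu B.
Proof.
by move=> hN; apply: (leq_bigmax_cond (F := fun M : {set {set T}} => #|M|)).
Qed.

Lemma matching0 B : is_matching B set0.
Proof. by rewrite /is_matching sub0set; apply/forallP => f; rewrite inE. Qed.

Lemma nu_attained B : exists2 N, is_matching B N & #|N| = nu B.
Proof.
have ne : 0 < #|[pred M | is_matching B M]|.
  by apply/card_gt0P; exists set0; rewrite inE matching0.
have [N] := eq_bigmax_cond (fun M : {set {set T}} => #|M|) ne.
by rewrite inE => hN eqN; exists N; rewrite // /nu -eqN.
Qed.

Lemma matching_subset B N : is_matching B N -> N \subset B.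
Proof. by case/andP. Qed.

Lemma matching_disjoint B N f1 f2 : is_matching B N ->
  f1 \in N -> f2 \in N -> f1 != f2 -> [disjoint f1 & f2].
Proof.
case/andP=> _ /forallP/(_ f1) h h1 h2 ne.
by move: h; rewrite h1 => /forallP/(_ f2); rewrite h2 ne.
Qed.

Lemma matching_edge_unique B N f1 f2 w : is_matching B N ->
  f1 \in N -> f2 \in N -> w \in f1 -> w \in f2 -> f1 = f2.
Proof.
move=> hN h1 h2 w1 w2; apply/eqP/negPn/negP => ne.
by move: (disjointFl (matching_disjoint hN h1 h2 ne) w2); rewrite w1.
Qed.

Lemma sub_matching B B' N N' : is_matching B N ->
  N' \subset N -> N' \subset B' -> is_matching B' N'.
Proof.
move=> hN sN sB; rewrite /is_matching sB /=.
apply/forallP => f1; apply/implyP => h1; apply/forallP => f2; apply/implyP => h2.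
by apply/implyP; apply: (matching_disjoint hN); apply: (subsetP sN).
Qed.

Lemma card_setD_sym F F' : #|F| = #|F'| -> #|F :\: F'| = #|F' :\: F|.
Proof.
by move=> eqF; apply: (@addnI #|F :&: F'|); rewrite cardsID setIC cardsID.
Qed.

Variable e : rel T.
Hypothesis e_sym : symmetric e.
Local Notation E := (edges e).

Lemma edgesP f : reflect (exists x y, e x y /\ f = [set x; y]) (f \in E).
Proof.
apply: (iffP imset2P) => [[x y _] | [x [y [exy ->]]]].
  by rewrite inE => /andP[_ exy] ->; exists x, y.
by apply: (Imset2spec (x1 := x) (x2 := y)); rewrite ?inE.
Qed.

Lemma mem_edges x y : e x y -> [set x; y] \in E.
Proof. by move=> exy; apply/edgesP; exists x, y. Qed.

Definition pendant p w := (degree e p == 1) && e p w.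

Lemma pendant_edge p w f : pendant p w -> f \in E -> p \in f -> f = [set p; w].
Proof.
case/andP=> /cards1P[a ha] epw /edgesP[x [y [exy ->]]].
have nbr z : e p z -> z = w.
  move=> epz; have : z \in [set y | e p y] by rewrite inE.
  have : w \in [set y | e p y] by rewrite inE.
  by rewrite ha !inE => /eqP -> /eqP ->.
rewrite !inE => /orP[] /eqP pxy; subst p; first by rewrite (nbr y exy).
by rewrite setUC (nbr x) // e_sym.
Qed.

Lemma augment_pendant B N p w : is_matching B N -> B \subset E ->
  [set p; w] \in B -> pendant p w -> (forall f, f \in N -> w \notin f) ->
  #|N| < nu B.
Proof.
move=> hN sBE pwB pp wN.
have pwN : [set p; w] \notin N by apply/negP => /wN; rewrite !inE eqxx orbT.
have disj f : f \in N -> [disjoint [set p; w] & f].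
  move=> fN; rewrite disjoint_subset; apply/subsetP => z.
  rewrite !inE => /orP[] /eqP ->; apply/negP => hz; last by move: (wN f fN); rewrite hz.
  have fE : f \in E by apply/(subsetP sBE)/(subsetP (matching_subset hN)).
  by move: (wN f fN); rewrite (pendant_edge pp fE hz) !inE eqxx orbT.
suff: is_matching B ([set p; w] |: N) by move/leq_nu; rewrite cardsU1 pwN.
apply/andP; split.
  by rewrite subUset sub1set pwB matching_subset.
apply/forallP => f1; apply/implyP; rewrite !inE => h1.
apply/forallP => f2; apply/implyP; rewrite !inE => h2.
case/orP: h1 => [/eqP-> | h1]; case/orP: h2 => [/eqP-> | h2].
- by rewrite eqxx.
- by rewrite implybE disj ?orbT.
- by rewrite implybE disjoint_sym disj ?orbT.
- by apply/implyP; apply: (matching_disjoint hN).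
Qed.

Lemma max_matching_covers F p w : is_max_matching E F -> pendant p w ->
  exists2 f0, f0 \in F & w \in f0.
Proof.
case/andP=> hF /eqP cF pp.
have [/existsP[f0 /andP[]] | uncov] := boolP [exists f0 in F, w \in f0].
  by exists f0.
suff: #|F| < nu E by rewrite cF ltnn.
apply: augment_pendant hF (subxx _) (mem_edges (proj2 (andP pp))) pp _ => f fF.
apply/negP => wf.
by move/negP: uncov; apply; apply/existsP; exists f; rewrite fF.
Qed.

Section StrictBound.
Variables (F F' M : {set {set T}}) (f0 : {set T}) (p w : T).
Hypotheses (hF : is_matching E F) (hF' : is_matching E F')
  (hM : is_matching (E :\: F') M) (f0F : f0 \in F) (wf0 : w \in f0)
  (pp : pendant p w) (pwE : [set p; w] \in E) (pwF : [set p; w] \notin F).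

Let EF_sub : E :\: F \subset E. Proof. exact: subsetDl. Qed.
Let pwEF : [set p; w] \in E :\: F. Proof. by rewrite inE pwF pwE. Qed.

Lemma matchingF'DF : is_matching (E :\: F) (F' :\: F).
Proof. by apply: (sub_matching hF' (subsetDl _ _)); apply/setSD/matching_subset. Qed.

Lemma matchingMDF : is_matching (E :\: F) (M :\: F).
Proof.
apply: (sub_matching hM (subsetDl _ _)); apply: setSD.
exact: subset_trans (matching_subset hM) (subsetDl _ _).
Qed.

Lemma MIF_sub : M :&: F \subset F :\: F'.
Proof.
apply/subsetP => f; rewrite !inE => /andP[fM ->]; rewrite andbT.
by move: (subsetP (matching_subset hM) f fM); rewrite inE => /andP[].
Qed.

(* One of the three estimates making up |M| <= 2 nu(G \ F) is strict. *)
Lemma one_bound_strict :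
  [\/ #|F' :\: F| < nu (E :\: F), #|M :\: F| < nu (E :\: F)
    | #|M :&: F| < #|F :\: F'|].
Proof.
have [f0F' | f0F'] := boolP (f0 \in F').
  apply: Or31; apply: augment_pendant matchingF'DF EF_sub pwEF pp _.
  move=> f; rewrite inE => /andP[fF fF']; apply/negP => wf.
  by move: fF; rewrite (matching_edge_unique hF' fF' f0F' wf wf0) f0F.
have [f0M | f0M] := boolP (f0 \in M).
  apply: Or32; apply: augment_pendant matchingMDF EF_sub pwEF pp _.
  move=> f; rewrite inE => /andP[fF fM]; apply/negP => wf.
  by move: fF; rewrite (matching_edge_unique hM fM f0M wf wf0) f0F.
apply: Or33; apply: (leq_trans (n := #|(F :\: F') :\ f0|.+1)).
  rewrite ltnS; apply: subset_leq_card; apply/subsetP => f fMF.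
  rewrite 2!inE (subsetP MIF_sub f fMF) andbT.
  by apply: contraNneq f0M => <-; move: fMF; rewrite inE => /andP[].
by rewrite (cardsD1 f0 (F :\: F')) inE f0F f0F'.
Qed.

Lemma matching_complement_bound : #|F| = #|F'| -> #|M| < 2 * nu (E :\: F).
Proof.
move=> cFF'; rewrite -(cardsID F M).
have := leq_nu matchingF'DF; have := leq_nu matchingMDF.
have := subset_leq_card MIF_sub.
by case: one_bound_strict; rewrite (card_setD_sym cFF'); lia.
Qed.

End StrictBound.

Lemma pendant_edge_outside F u v w : irreflexive e -> is_matching E F ->
  u != v -> e u w -> exists2 p, p \in [:: u; v] & [set p; w] \notin F.
Proof.
move=> e_irr hF uv euw.
have [uwF | ] := boolP ([set u; w] \in F); last by exists u; rewrite ?inE ?eqxx.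
exists v; rewrite ?inE ?eqxx ?orbT //; apply/negP => vwF.
have : u \in [set v; w].
  by rewrite -(matching_edge_unique hF uwF vwF (w := w)) ?setU11 // !inE eqxx orbT.
rewrite !inE => /orP[] /eqP eq_u; first by rewrite eq_u eqxx in uv.
by rewrite eq_u e_irr in euw.
Qed.

Lemma lg_attained : exists2 F, is_max_matching E F & nu (E :\: F) <= lg e.
Proof.
apply: (big_ind (fun x => exists2 F, is_max_matching E F & nu (E :\: F) <= x)).
- have [F0 hF0 cF0] := nu_attained E.
  exists F0; first by rewrite /is_max_matching hF0 cF0 eqxx.
  have [N hN <-] := nu_attained (E :\: F0).
  apply: leq_nu; apply: (sub_matching hN (subxx _)).
  exact: subset_trans (matching_subset hN) (subsetDl _ _).
- move=> x y [F1 h1 h1'] [F2 h2 h2']; rewrite /minn; case: ifP => _.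
    by exists F1.
  by exists F2.
- by move=> F hF; exists F.
Qed.

Lemma Lg_attained : exists2 F', is_max_matching E F' & Lg e = nu (E :\: F').
Proof.
have [F0 hF0 cF0] := nu_attained E.
have ne : 0 < #|[pred F | is_max_matching E F]|.
  by apply/card_gt0P; exists F0; rewrite inE /is_max_matching hF0 cF0 eqxx.
by have [F'] := eq_bigmax_cond (fun F => nu (E :\: F)) ne; rewrite inE; exists F'.
Qed.

End Matchings.

Theorem corollary1 (T : finType) (e : rel T)
  (e_sym : symmetric e) (e_irr : irreflexive e) :
  Lg e = 2 * lg e ->
  ~ exists u v w : T,
      [/\ u != v, degree e u = 1, degree e v = 1, e u w & e v w].
Proof.
move=> hL [u [v [w [uv du dv euw evw]]]].
have pendant_uv p : p \in [:: u; v] -> pendant e p w.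
  by rewrite !inE /pendant => /orP[] /eqP->; rewrite ?du ?dv ?euw ?evw.
have [F hFmax hFl] := lg_attained e.
have hF : is_matching (edges e) F by case/andP: hFmax.
have [f0 f0F wf0] := max_matching_covers e_sym hFmax (pendant_uv u (mem_head _ _)).
have [p /pendant_uv pp pwF] := pendant_edge_outside e_irr hF uv euw.
have pwE : [set p; w] \in edges e by apply/mem_edges/(proj2 (andP pp)).
have [F' /andP[hF' /eqP cF'] eqL] := Lg_attained e.
have [M hM cM] := nu_attained (edges e :\: F').
have := matching_complement_bound e_sym hF hF' hM f0F wf0 pp pwE pwF.
case/andP: hFmax => _ /eqP ->; rewrite cF' cM -eqL hL => /(_ erefl).
by move: hFl; lia.
Qed.
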